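(* Let $a^*\in A$ be a pure strategy profile of $G$. If for every $\bar p\in(0,1)$ there exists $p\in(\bar p,1)$ such that $a^*$ is stable for the degree of observability $p$, then $a^*$ is weakly Pareto efficient with respect to $\pi$.
   Context: Objective game: $G=(N,A,\pi)$ is a finite $n$-player normal-form game, $N=\{1,\dots,n\}$, finite action sets $A_i$, $A=\prod_iA_i$, fitness functions $\pi_i:A\to\mathbb{R}$ extended multilinearly to $\prod_i\Delta(A_i)$. $\sigma$ strongly Pareto dominates $\sigma'$ if $\pi_i(\sigma)>\pi_i(\sigma')$ for all $i$; $\sigma$ is weakly Pareto efficient if no profile in $\prod_i\Delta(A_i)$ strongly Pareto dominates it. Preference types: $\Theta=\mathbb{R}^A$ (extended multilinearly). $\mathcal{M}(\Theta^n)$: product distributions $\mu=\mu_1\times\dots\times\mu_n$ with finitely supported marginals; $\operatorname{supp}\mu=\prod_i\operatorname{supp}\mu_i$, $\mu(\theta)=\prod_i\mu_i(\theta_i)$, $\mu_{-i}(\theta_{-i})=\prod_{j\ne i}\mu_j(\theta_j)$. Mutants: for nonempty $J\subseteq N$, $\tilde\theta_J\in\prod_{j\in J}(\Theta\setminus\operatorname{supp}\mu_j)$ with shares $\varepsilon\in(0,1)^{|J|}$, $\|\varepsilon\|=\max_j\varepsilon_j$; post-entry $\tilde\mu^\varepsilon_i=(1-\varepsilon_i)\mu_i+\varepsilon_i\delta_{\tilde\theta_i}$ for $i\in J$, $\mu_i$ otherwise. Partial observability with degree $p\in(0,1)$: each player independently observes opponents' types with probability $p$ and otherwise knows only $\mu_{-i}$.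 Strategies: $b:\operatorname{supp}\mu\to\prod_i\Delta(A_i)$ (play when observing) and $s_i:\operatorname{supp}\mu_i\to\Delta(A_i)$ (play when not observing), $s(\theta)=(s_i(\theta_i))_i$. For a matched profile $\theta$ and the set $T\subseteq N$ of non-observing players, the profile played is $(s(\theta)_T,b(\theta)_{-T})$. $(b,s)$ is an equilibrium if for all $\theta\in\operatorname{supp}\mu$ and $i$: $b_i(\theta)\in\arg\max_{\sigma_i}\sum_{T\subseteq N\setminus\{i\}}p^{n-1-|T|}(1-p)^{|T|}\theta_i(\sigma_i,(s_{-i}(\theta_{-i})_T,b_{-i}(\theta)_{-T}))$ and $s_i(\theta_i)\in\arg\max_{\sigma_i}\sum_{\theta'_{-i}}\mu_{-i}(\theta'_{-i})\sum_{T\subseteq N\setminus\{i\}}p^{n-1-|T|}(1-p)^{|T|}\theta_i(\sigma_i,(s_{-i}(\theta'_{-i})_T,b_{-i}(\theta_i,\theta'_{-i})_{-T}))$; $B_p(\mu)$ is the set of these; $(\mu,b,s)$ is a configuration. Aggregate outcome: $\varphi_{\mu,b,s}(a)=\sum_{\theta}\mu(\theta)\sum_{T\subseteq N}p^{n-|T|}(1-p)^{|T|}\prod_i(s(\theta)_T,b(\theta)_{-T})_i(a_i)$. Average fitness: $\Pi_{\theta_i}(\mu;b,s)=\sum_{\theta'_{-i}}\mu_{-i}(\theta'_{-i})\sum_{T\subseteq N}p^{n-|T|}(1-p)^{|T|}\pi_i(s(\theta_i,\theta'_{-i})_T,b(\theta_i,\theta'_{-i})_{-T})$. Balanced: equal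 average fitness of all types within each population. Nearby set: $B_p^\eta(\tilde\mu^\varepsilon;b,s)=\{(\tilde b,\tilde s)\in B_p(\tilde\mu^\varepsilon):\max_i\|\tilde b_i(\theta)-b_i(\theta)\|\le\eta,\ \max_i\|\tilde s_i(\theta_i)-s_i(\theta_i)\|\le\eta\ \forall\theta\in\operatorname{supp}\mu\}$. $(\mu,b,s)$ is stable (for degree $p$) if balanced and for every nonempty $J$, every $\tilde\theta_J$, every $\eta>0$, there are $\bar\eta\in[0,\eta)$, $\bar\epsilon\in(0,1)$ such that for all $\varepsilon$ with $\|\varepsilon\|\in(0,\bar\epsilon)$, $B_p^{\bar\eta}(\tilde\mu^\varepsilon;b,s)\ne\emptyset$ and each of its elements satisfies (i) some $j\in J$ has $\Pi_{\theta_j}>\Pi_{\tilde\theta_j}$ (post-entry) for all $\theta_j\in\operatorname{supp}\mu_j$, or (ii) for every $i$ all types in $\operatorname{supp}\tilde\mu^\varepsilon_i$ have equal post-entry average fitness. A pure profile $a^*$ is stable for degree $p$ if the point mass at $a^*$ is the aggregate outcome of a stable configuration for $p$. *)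

From HB Require Import structures.
From mathcomp Require Import all_boot all_order all_algebra.
Set Implicit Arguments. Unset Strict Implicit. Unset Printing Implicit Defensive.
Import Order.TTheory GRing.Theory Num.Theory.
Local Open Scope ring_scope.

Section Game.
Variable R : realFieldType.
Variable n : nat.
Variable Act : 'I_n -> finType.

Definition prof := {dffun forall i : 'I_n, Act i}.
Definition mstrat (i : 'I_n) := {ffun Act i -> R}.
Definition mprof := forall i : 'I_n, mstrat i.
Definition is_mixed (i : 'I_n) (x : mstrat i) :=
  (forall a, 0 <= x a) /\ \sum_a x a = 1.
Definition is_mprof (s : mprof) := forall i, is_mixed (s i).

Definition mlin (u : prof -> R) (s : mprof) : R :=
  \sum_(a : prof) (\prod_(j < n) s j (a j)) * u a.
Definition mlin_dev (u : prof -> R) (i : 'I_n) (x : mstrat i) (s : mprof) : R :=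
  \sum_(a : prof) (x (a i) * \prod_(j < n | j != i) s j (a j)) * u a.

Definition pure (a : prof) : mprof :=
  fun j => [ffun x => if x == a j then 1 else 0].

Definition strongly_dominates (pi : 'I_n -> prof -> R) (s s' : mprof) :=
  forall i, mlin (pi i) s' < mlin (pi i) s.
Definition weakly_pareto (pi : 'I_n -> prof -> R) (s : mprof) :=
  ~ exists s', is_mprof s' /\ strongly_dominates pi s' s.

Definition theta := {ffun prof -> R}.
Record fdist := FDist { fsupp : seq theta; fwt : theta -> R }.
Definition is_fdist (m : fdist) :=
  [/\ uniq (fsupp m), (forall t, t \in fsupp m -> 0 < fwt m t)
    & \sum_(t <- fsupp m) fwt m t = 1].
(* product distribution mu = mu_1 x ... x mu_n, given by its marginals *)
Definition popstate := 'I_n -> fdist.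
Definition is_popstate (mu : popstate) := forall i, is_fdist (mu i).
Definition tprof := 'I_n -> theta.
Definition in_supp (mu : popstate) (th : tprof) := forall i, th i \in fsupp (mu i).

(* sum over the types of the players in S drawn from prod_{j in S} supp mu_j,
   weighted by prod_{j in S} mu_j(th_j); players outside S have type th0 j *)
Definition texp (mu : popstate) (S : {set 'I_n}) (th0 : tprof) (F : tprof -> R) : R :=
  \sum_(k : {dffun forall j : 'I_n,
          'I_(if j \in S then size (fsupp (mu j)) else 1%N)})
    (\prod_(j in S) fwt (mu j) (nth (th0 j) (fsupp (mu j)) (k j))) *
    F (fun j => if j \in S then nth (th0 j) (fsupp (mu j)) (k j) else th0 j).

Definition bstrat := tprof -> mprof.                 (* b : play when observing *)
Definition sstrat := forall j : 'I_n, theta -> mstrat j. (* s : play when not observing *)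

Definition play (b : bstrat) (s : sstrat) (th : tprof) (T : {set 'I_n}) : mprof :=
  fun j => if j \in T then s j (th j) else b th j.

Definition pr (p : R) (m k : nat) : R := p ^+ (m - k) * (1 - p) ^+ k.

Definition U_obs (p : R) (b : bstrat) (s : sstrat) (i : 'I_n) (th : tprof) (x : mstrat i) : R :=
  \sum_(T : {set 'I_n} | T \subset ~: [set i])
     pr p n.-1 #|T| * mlin_dev (th i) x (play b s th T).

Definition U_nobs (p : R) (mu : popstate) (b : bstrat) (s : sstrat) (i : 'I_n)
    (t : theta) (x : mstrat i) : R :=
  texp mu (~: [set i]) (fun _ => t) (fun th =>
    \sum_(T : {set 'I_n} | T \subset ~: [set i])
      pr p n.-1 #|T| * mlin_dev t x (play b s th T)).

Definition is_eq (p : R) (mu : popstate) (b : bstrat) (s : sstrat) :=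
  [/\ (forall th, in_supp mu th -> is_mprof (b th)),
      (forall i t, t \in fsupp (mu i) -> is_mixed (s i t)),
      (forall th, in_supp mu th -> forall i (x : mstrat i), is_mixed x ->
          U_obs p b s th x <= U_obs p b s th (b th i))
    & (forall i t, t \in fsupp (mu i) -> forall x : mstrat i, is_mixed x ->
          U_nobs p mu b s t x <= U_nobs p mu b s t (s i t))].

Definition outcome (p : R) (mu : popstate) (b : bstrat) (s : sstrat) (a : prof) : R :=
  texp mu setT (fun _ => [ffun _ => 0]) (fun th =>
    \sum_(T : {set 'I_n}) pr p n #|T| * \prod_(j < n) play b s th T j (a j)).

Definition avgfit (pi : 'I_n -> prof -> R) (p : R) (mu : popstate) (b : bstrat)
    (s : sstrat) (i : 'I_n) (t : theta) : R :=
  texp mu (~: [set i]) (fun _ => t) (fun th =>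
    \sum_(T : {set 'I_n}) pr p n #|T| * mlin (pi i) (play b s th T)).

Definition balanced pi p mu b s :=
  forall i t t', t \in fsupp (mu i) -> t' \in fsupp (mu i) ->
    avgfit pi p mu b s i t = avgfit pi p mu b s i t'.

Definition postentry (mu : popstate) (J : {set 'I_n}) (mt : tprof) (eps : 'I_n -> R) : popstate :=
  fun i => if i \in J then
     FDist (rcons (fsupp (mu i)) (mt i))
           (fun t => if t == mt i then eps i else (1 - eps i) * fwt (mu i) t)
   else mu i.

Definition near (eta : R) (mu : popstate) (b : bstrat) (s : sstrat) (bt : bstrat) (st : sstrat) :=
  (forall th, in_supp mu th -> forall i a, `|bt th i a - b th i a| <= eta) /\
  (forall i t, t \in fsupp (mu i) -> forall a, `|st i t a - s i t a| <= eta).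

Definition stable (pi : 'I_n -> prof -> R) (p : R) (mu : popstate) (b : bstrat) (s : sstrat) :=
  [/\ is_popstate mu, is_eq p mu b s, balanced pi p mu b s &
  forall J : {set 'I_n}, J != set0 ->
  forall mt : tprof, (forall j, j \in J -> mt j \notin fsupp (mu j)) ->
  forall eta : R, 0 < eta ->
  exists etab epsb : R, [/\ 0 <= etab < eta, 0 < epsb < 1 &
  forall eps : 'I_n -> R,
    (forall j, j \in J -> 0 < eps j < 1) -> (forall j, j \in J -> eps j < epsb) ->
    (exists bt st, is_eq p (postentry mu J mt eps) bt st /\ near etab mu b s bt st) /\
    (forall bt st, is_eq p (postentry mu J mt eps) bt st -> near etab mu b s bt st ->
       (exists2 j, j \in J & forall t, t \in fsupp (mu j) ->
          avgfit pi p (postentry mu J mt eps) bt st j (mt j)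
            < avgfit pi p (postentry mu J mt eps) bt st j t)
       \/ balanced pi p (postentry mu J mt eps) bt st)]].

Definition stable_pure (pi : 'I_n -> prof -> R) (p : R) (astar : prof) :=
  exists mu b s, stable pi p mu b s /\
    forall a, outcome p mu b s a = (if a == astar then 1 else 0).

End Game.

From HB Require Import structures.
From mathcomp Require Import all_boot all_order all_algebra lra zify.
From Stdlib Require Import FunctionalExtensionality.
Import Order.TTheory GRing.Theory Num.Theory.
Set Implicit Arguments. Unset Strict Implicit. Unset Printing Implicit Defensive.
Local Open Scope ring_scope.

(* Suppose a mixed profile sig strongly Pareto dominates a* and (mu, b, s) is a
   stable configuration with aggregate outcome a* for a degree p close to 1.  Then
   every incumbent plays a*, and a*_i is a best reply of every incumbent type of
   player i.  Let all populations be invaded at once by types that are indifferent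
   between all outcomes.  Mutants who observe that they are matched only with
   mutants play sig; everybody else plays a*.  This is a post-entry equilibrium,
   and on incumbent matches it coincides with (b, s).  A mutant is matched only
   with mutants with positive probability, and then, when all players observe
   (probability p^n), it earns the Pareto gain over a*; whatever it can lose
   arises only when someone does not observe, with total weight O(1 - p).  Hence
   for p near 1 every mutant is strictly fitter than every incumbent of its
   population, which rules out both alternatives of stability. *)

Section DependentDistributivity.
Variables (R : comPzSemiRingType) (I : finType) (T_ : I -> finType).

Lemma big_distr_dffun_seq (F : forall i, T_ i -> R) (r : seq I)
    (a0 : forall i, T_ i) : uniq r ->
  \prod_(i <- r) \sum_(x : T_ i) F i x =
  \sum_(a : {dffun forall i, T_ i} | [forall i, (i \notin r) ==> (a i == a0 i)])
     \prod_(i <- r) F i (a i).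
Proof.
elim: r a0 => [a0 _ | j r IH a0 /= /andP [jr ur]].
  rewrite big_nil (big_pred1 (finfun a0 : {dffun forall i, T_ i})) ?big_nil // => a /=.
  apply/forallP/eqP => [a_a0 | ->]; last by move=> i; rewrite ffunE.
  by apply/ffunP => i; rewrite ffunE; apply/eqP/a_a0.
rewrite big_cons big_distrl.
rewrite [RHS](partition_big (fun a : {dffun forall i, T_ i} => a j) xpredT) //=.
apply: eq_bigr => x _; rewrite (IH (dfwith a0 x)) // big_distrr /=.
apply: eq_big => [a | a /forallP/(_ j)]; last by rewrite jr dfwith_in big_cons => /eqP ->.
apply/forallP/andP => [a_out | [/forallP a_out /eqP a_j] i].
  split; last by move: (a_out j); rewrite jr dfwith_in.
  apply/forallP => i; apply/implyP; rewrite in_cons negb_or => /andP [ij ir].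
  by move: (a_out i); rewrite ir dfwith_out // eq_sym.
case: (dfwithP a0 x i) => [|i' ji']; first by rewrite a_j eqxx implybT.
apply/implyP => ir; move: (a_out i'); rewrite in_cons negb_or ir andbT.
by rewrite eq_sym ji'.
Qed.

Lemma bigA_distr_dffun (a0 : forall i, T_ i) (F : forall i, T_ i -> R) :
  \prod_i \sum_(x : T_ i) F i x = \sum_(a : {dffun forall i, T_ i}) \prod_i F i (a i).
Proof.
rewrite (big_distr_dffun_seq F a0 (index_enum_uniq _)).
by apply: eq_bigl => a; apply/forallP => i; rewrite mem_index_enum.
Qed.

End DependentDistributivity.

Section Game.
Variables (R : realFieldType) (n : nat) (Act : 'I_n -> finType).

Local Notation prof := (prof Act).
Local Notation mprof := (mprof R Act).
Local Notation mstrat := (mstrat R Act).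
Local Notation theta := (theta R Act).
Local Notation tprof := (tprof R Act).
Local Notation popstate := (popstate R Act).
Local Notation bstrat := (bstrat R Act).
Local Notation sstrat := (sstrat R Act).

Lemma mixed_le1 i (x : mstrat i) y : is_mixed x -> x y <= 1.
Proof. by move=> [x_ge0 <-]; rewrite (bigD1 y) //= lerDl sumr_ge0. Qed.

Lemma mprod_ge0 (m : mprof) (a : prof) : is_mprof m -> 0 <= \prod_j m j (a j).
Proof. by move=> m_mprof; apply: prodr_ge0 => j _; apply: (m_mprof j).1. Qed.

Lemma mprod_le1 (m : mprof) (a : prof) : is_mprof m -> \prod_j m j (a j) <= 1.
Proof. by move=> m_mprof; apply: prodr_ile1 => j _; rewrite (m_mprof j).1 mixed_le1. Qed.

Lemma sum_mprod (a0 : prof) (m : mprof) : is_mprof m ->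
  \sum_(a : prof) \prod_j m j (a j) = 1.
Proof.
move=> m_mprof; rewrite -(bigA_distr_dffun a0 (fun j y => m j y)).
by apply: big1 => j _; apply: (m_mprof j).2.
Qed.

Lemma mprof_dfwith (m : mprof) i (x : mstrat i) :
  is_mixed x -> is_mprof m -> is_mprof (dfwith m x).
Proof. by move=> x_mixed m_mprof j; case: dfwithP. Qed.

Lemma mlin_devE (u : prof -> R) i (x : mstrat i) (m : mprof) :
  mlin_dev u x m = mlin u (dfwith m x).
Proof.
apply: eq_bigr => a _; rewrite [in RHS](bigD1 i) //= dfwith_in; congr (_ * _ * _).
by apply: eq_bigr => j ji; rewrite dfwith_out // eq_sym.
Qed.

Lemma mlin_cst (a0 : prof) (u : prof -> R) (c : R) (m : mprof) :
  (forall a, u a = c) -> is_mprof m -> mlin u m = c.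
Proof.
move=> uc m_mprof; rewrite /mlin; under eq_bigr do rewrite uc.
by rewrite -big_distrl /= sum_mprod ?mul1r.
Qed.

Lemma mlin_dev_cst (a0 : prof) (u : prof -> R) (c : R) i (x : mstrat i) (m : mprof) :
  (forall a, u a = c) -> is_mixed x -> is_mprof m -> mlin_dev u x m = c.
Proof.
by move=> uc x_mixed m_mprof; rewrite mlin_devE (mlin_cst a0 uc) //; apply: mprof_dfwith.
Qed.

Lemma pure_mixed (a : prof) i : is_mixed (pure R a i).
Proof.
split=> [y|]; first by rewrite ffunE; case: eqP.
rewrite (bigD1 (a i)) //= ffunE eqxx big1 ?addr0 // => y /negbTE.
by rewrite ffunE => ->.
Qed.

Lemma pure_mprof (a : prof) : is_mprof (pure R a).
Proof. exact: pure_mixed. Qed.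

Lemma eq_pure_mprof (a0 : prof) (m : mprof) : is_mprof m ->
  (forall a, a != a0 -> \prod_j m j (a j) = 0) -> forall j, m j = pure R a0 j.
Proof.
move=> m_mprof off_a0.
have prod_a0 : \prod_j m j (a0 j) = 1.
  by have := sum_mprod a0 m_mprof; rewrite (bigD1 a0) //= [X in _ + X]big1 ?addr0.
have m_a0 j : m j (a0 j) = 1.
  apply/eqP; rewrite eq_le mixed_le1 //= -prod_a0 (bigD1 j) //=.
  by rewrite ler_piMr ?(m_mprof j).1 // prodr_ile1 // => k _; rewrite (m_mprof k).1 mixed_le1.
move=> j; apply/ffunP => y; rewrite ffunE; case: eqP => [-> | /eqP y_a0]; first exact: m_a0.
have := (m_mprof j).2; rewrite (bigD1 (a0 j)) //= m_a0 -[X in _ = X]addr0 => /addrI rest0.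
exact: (psumr_eq0P (fun y _ => (m_mprof j).1 y) rest0).
Qed.

Lemma norm_mlin_le (u : prof -> R) (m : mprof) : is_mprof m ->
  `|mlin u m| <= \sum_a `|u a|.
Proof.
move=> m_mprof; apply: le_trans (ler_norm_sum _ _ _) _; apply: ler_sum => a _.
by rewrite normrM ger0_norm ?mprod_ge0 // ler_piMl ?mprod_le1.
Qed.

Lemma play_mprof (b : bstrat) (s : sstrat) th T :
  is_mprof (b th) -> (forall j, is_mixed (s j (th j))) -> is_mprof (play b s th T).
Proof. by move=> b_mprof s_mixed j; rewrite /play; case: ifP. Qed.

Lemma pr_gt0 (p : R) m k : 0 < p < 1 -> 0 < pr p m k.
Proof. by case/andP => p0 p1; rewrite /pr mulr_gt0 // exprn_gt0 // subr_gt0. Qed.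

Lemma pr_le (p : R) m k : 1/2 <= p < 1 -> (0 < k <= m)%N ->
  pr p m k <= p ^+ m.-1 * (1 - p).
Proof.
case/andP=> ph p1; case: k => // k /= km.
have q0 : 0 <= 1 - p by lra.
have pow_le : (1 - p) ^+ k <= p ^+ k by rewrite lerXn2r ?nnegrE; lra.
have -> : m.-1 = (m - k.+1 + k)%N by lia.
rewrite /pr exprS exprD -mulrA [(1 - p) * _]mulrC ler_wpM2l ?exprn_ge0 ?ler_wpM2r //; lra.
Qed.

Lemma pr_weighted_sum_gt0 (p K : R) (f : {set 'I_n} -> R) :
  (0 < n)%N -> 1/2 <= p < 1 -> 0 <= K -> (forall T, - K <= f T) ->
  (1 - p) * (2 * #|{set 'I_n}|%:R * K) < f set0 ->
  0 < \sum_(T : {set 'I_n}) pr p n #|T| * f T.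
Proof.
move=> n_gt0 /andP [ph p1] K0 fK f0_big.
have p01 : 0 < p < 1 by apply/andP; split; lra.
pose P := p ^+ n.-1; pose N : R := #|{set 'I_n}|%:R; pose c := P * (1 - p) * K.
have P0 : 0 < P by rewrite exprn_gt0 //; lra.
have c0 : 0 <= c by rewrite !mulr_ge0 //; [exact: ltW | lra].
(* The term [T = set0] has weight [p ^+ n], every other one at most [P * (1 - p)]. *)
have term_ge T : T != set0 -> - c <= pr p n #|T| * f T.
  move=> T0; have pr_T : pr p n #|T| <= P * (1 - p).
    by apply: pr_le; rewrite ?ph // card_gt0 T0 /= (leq_trans (max_card _)) ?card_ord.
  have pr0 := ltW (pr_gt0 n #|T| p01).
  apply: le_trans (_ : - (pr p n #|T| * K) <= _).
    by rewrite lerN2 ler_wpM2r.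
  by rewrite -mulrN ler_wpM2l.
have rest_ge : - (c * N) <= \sum_(T | T != set0) pr p n #|T| * f T.
  apply: le_trans (ler_sum _ term_ge); rewrite /N mulr_natr -sumr_const -sumrN.
  by rewrite [X in X <= _](bigD1 set0) //= gerDr oppr_le0.
have pr_set0 : pr p n #|set0 : {set 'I_n}| = p * P.
  by rewrite cards0 /pr subn0 expr0 mulr1 /P -exprS prednK.
have f0_gt0 : 0 < f set0.
  by apply: le_lt_trans f0_big; rewrite !mulr_ge0 //; lra.
have gain : (1 - p) * K * N < p * f set0.
  have p_half : 0 <= p - 1/2 by lra.
  have := mulr_ge0 p_half (ltW f0_gt0); rewrite -/N in f0_big; lra.
rewrite (bigD1 set0) //= pr_set0; apply: lt_le_trans (lerD (lexx _) rest_ge).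
have margin : 0 < P * (p * f set0 - (1 - p) * K * N) by rewrite mulr_gt0 // subr_gt0.
by rewrite /c; lra.
Qed.

Lemma near_one_threshold (I : finType) (c : R) (d : I -> R) :
  0 <= c -> (forall i, 0 < d i) ->
  exists2 pbar : R, 0 < pbar < 1 &
    forall p, pbar < p < 1 -> 1/2 <= p /\ forall i, (1 - p) * c < d i.
Proof.
move=> c0 d_gt0; pose del := \big[Order.min/1]_i d i.
have del_gt0 : 0 < del by apply: lt_bigmin.
(* [q * (c + 2 * del) = del] yields both [q <= 1/2] and [q * c < del]. *)
pose q := del / (c + 2 * del).
have den_gt0 : 0 < c + 2 * del by lra.
have q_gt0 : 0 < q by exact: divr_gt0.
have q_def : q * (c + 2 * del) = del by rewrite divfK // gt_eqF.
have q_half : q <= 1/2 by nra.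
exists (1 - q) => [|p /andP [pq p1]]; first by apply/andP; split; lra.
split=> [|i]; first by lra.
have del_le : del <= d i by exact: bigmin_le.
nra.
Qed.

Definition tidx (mu : popstate) (S : {set 'I_n}) :=
  {dffun forall j : 'I_n, 'I_(if j \in S then size (fsupp (mu j)) else 1%N)}.
Definition tidx_wt (mu : popstate) S (th0 : tprof) (k : tidx mu S) : R :=
  \prod_(j in S) fwt (mu j) (nth (th0 j) (fsupp (mu j)) (k j)).
Definition tidx_prof (mu : popstate) S (th0 : tprof) (k : tidx mu S) : tprof :=
  fun j => if j \in S then nth (th0 j) (fsupp (mu j)) (k j) else th0 j.

Definition drawn (mu : popstate) (S : {set 'I_n}) (th0 th : tprof) :=
  (forall j, j \in S -> th j \in fsupp (mu j)) /\ (forall j, j \notin S -> th j = th0 j).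

Definition pos_wts (mu : popstate) := forall j t, t \in fsupp (mu j) -> 0 < fwt (mu j) t.

Section TypeExpectation.
Variables (mu : popstate) (S : {set 'I_n}) (th0 : tprof).

Lemma texpE F : texp mu S th0 F = \sum_(k : tidx mu S) tidx_wt th0 k * F (tidx_prof th0 k).
Proof. by []. Qed.

Lemma tidx_lt (k : tidx mu S) j : j \in S -> (k j < size (fsupp (mu j)))%N.
Proof. by move=> jS; move: (ltn_ord (k j)); move: (nat_of_ord (k j)) => m; rewrite jS. Qed.

Lemma drawn_tidx_prof (k : tidx mu S) : drawn mu S th0 (tidx_prof th0 k).
Proof.
split=> j jS; rewrite /tidx_prof; last by rewrite (ifN _ _ jS).
by rewrite (ifT _ _ jS) mem_nth ?tidx_lt.
Qed.

Lemma drawnP th : drawn mu S th0 th -> exists k : tidx mu S, tidx_prof th0 k = th.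
Proof.
move=> [thS th_out].
have idx_lt j : ((if j \in S then index (th j) (fsupp (mu j)) else 0) <
                 (if j \in S then size (fsupp (mu j)) else 1))%N.
  by case: ifP => // jS; rewrite index_mem thS.
exists [ffun j => Ordinal (idx_lt j)]; apply: functional_extensionality => j.
rewrite /tidx_prof ffunE /=; case: ifP => jS; first by rewrite jS nth_index ?thS.
by rewrite th_out ?jS.
Qed.

Lemma eq_texp F G : (forall th, drawn mu S th0 th -> F th = G th) ->
  texp mu S th0 F = texp mu S th0 G.
Proof. by move=> FG; apply: eq_bigr => k _; rewrite FG //; apply: drawn_tidx_prof. Qed.

Lemma texp_cst (th0' : tprof) (c : R) :
  texp mu S th0 (fun _ => c) = texp mu S th0' (fun _ => c).
Proof.
apply: eq_bigr => k _; congr (_ * _); apply: eq_bigr => j jS.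
by rewrite (set_nth_default (th0' j)) // tidx_lt.
Qed.

Hypothesis wts_gt0 : pos_wts mu.

Lemma tidx_wt_gt0 (k : tidx mu S) : 0 < tidx_wt th0 k.
Proof. by apply: prodr_gt0 => j jS; rewrite wts_gt0 // mem_nth // tidx_lt. Qed.

Lemma ler_texp F G : (forall th, drawn mu S th0 th -> F th <= G th) ->
  texp mu S th0 F <= texp mu S th0 G.
Proof.
move=> FG; rewrite !texpE; apply: ler_sum => k _.
by apply: ler_wpM2l; [exact: ltW (tidx_wt_gt0 k) | exact: FG _ (drawn_tidx_prof k)].
Qed.

Lemma ltr_texp F G th1 : (forall th, drawn mu S th0 th -> F th <= G th) ->
  drawn mu S th0 th1 -> F th1 < G th1 -> texp mu S th0 F < texp mu S th0 G.
Proof.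
move=> FG /drawnP [k1 <-] FG1; rewrite !texpE (bigD1 k1) //= [X in _ < X](bigD1 k1) //=.
rewrite ltr_leD ?ltr_pM2l ?tidx_wt_gt0 //; apply: ler_sum => k _.
by apply: ler_wpM2l; [exact: ltW (tidx_wt_gt0 k) | exact: FG _ (drawn_tidx_prof k)].
Qed.

Lemma texp_eq0 F : (forall th, drawn mu S th0 th -> 0 <= F th) ->
  texp mu S th0 F = 0 -> forall th, drawn mu S th0 th -> F th = 0.
Proof.
move=> F_ge0 texp0 th /drawnP [k <-].
have terms_ge0 (k' : tidx mu S) : 0 <= tidx_wt th0 k' * F (tidx_prof th0 k').
  by apply: mulr_ge0; [exact: ltW (tidx_wt_gt0 k') | exact: F_ge0 _ (drawn_tidx_prof k')].
move: (psumr_eq0P (fun k' _ => terms_ge0 k') texp0) => /(_ k isT) /eqP.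
by rewrite mulf_eq0 (gt_eqF (tidx_wt_gt0 k)) => /eqP.
Qed.

End TypeExpectation.

Lemma head_fsupp (m : fdist R Act) (t0 : theta) : is_fdist m -> head t0 (fsupp m) \in fsupp m.
Proof.
case=> _ _; case: (fsupp m) => [|t l _]; last exact: mem_head.
by rewrite big_nil => /eqP; rewrite eq_sym oner_eq0.
Qed.

Lemma popstate_pos_wts (mu : popstate) : is_popstate mu -> pos_wts mu.
Proof. by move=> mu_pop j; have [_ wt_pos _] := mu_pop j. Qed.

Lemma in_supp_at (mu : popstate) i t : is_popstate mu -> t \in fsupp (mu i) ->
  exists2 th, in_supp mu th & th i = t.
Proof.
move=> mu_pop t_supp; exists (fun j => if j == i then t else head t (fsupp (mu j))).
  by move=> j; case: eqP => [-> | _] //; apply: head_fsupp.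
by rewrite eqxx.
Qed.

Lemma play_eq_pure (p : R) (mu : popstate) (b : bstrat) (s : sstrat) (astar : prof) :
  0 < p < 1 -> is_popstate mu -> is_eq p mu b s ->
  (forall a, outcome p mu b s a = (if a == astar then 1 else 0)) ->
  forall th, in_supp mu th -> forall T, play b s th T = pure R astar.
Proof.
move=> p01 mu_pop [b_mprof s_mixed _ _] out_astar th th_supp T.
have play_mp th' T' : in_supp mu th' -> is_mprof (play b s th' T').
  by move=> th'_supp; apply: play_mprof => [|j]; [exact: b_mprof | exact: s_mixed].
have terms_ge0 th' (T' : {set 'I_n}) (a : prof) : in_supp mu th' ->
    0 <= pr p n #|T'| * \prod_j play b s th' T' j (a j).
  move=> th'_supp; apply: mulr_ge0; first exact: ltW (pr_gt0 _ _ p01).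
  exact: mprod_ge0 (play_mp _ _ th'_supp).
have drawnT th' : drawn mu setT (fun _ => [ffun _ => 0]) th' <-> in_supp mu th'.
  split=> [[th'_supp _] j | th'_supp]; first exact/th'_supp/in_setT.
  by split=> j //; rewrite in_setT.
apply: functional_extensionality_dep => j; move: j.
apply: (eq_pure_mprof (play_mp _ _ th_supp)) => a a_ne.
have := out_astar a; rewrite (negbTE a_ne) => outcome0.
have sum_ge0 th' : drawn mu setT (fun _ => [ffun _ => 0]) th' ->
    0 <= \sum_(T' : {set 'I_n}) pr p n #|T'| * \prod_j play b s th' T' j (a j).
  by move/drawnT => th'_supp; apply: sumr_ge0 => T' _; exact: terms_ge0.
have := texp_eq0 (popstate_pos_wts mu_pop) sum_ge0 outcome0 (proj2 (drawnT th) th_supp).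
move/(psumr_eq0P (fun T' _ => terms_ge0 th T' a th_supp))/(_ T isT)/eqP.
by rewrite mulf_eq0 gt_eqF ?pr_gt0 //= => /eqP.
Qed.

Definition obs_wt (p : R) (i : 'I_n) :=
  \sum_(T : {set 'I_n} | T \subset ~: [set i]) pr p n.-1 #|T|.

Lemma obs_wt_gt0 p i : 0 < p < 1 -> 0 < obs_wt p i.
Proof.
move=> p01; rewrite /obs_wt (bigD1 set0) ?sub0set //= ltr_pwDl ?pr_gt0 //.
by apply: sumr_ge0 => T _; apply/ltW/pr_gt0.
Qed.

Lemma obs_sum_cst p (t : theta) i (x : mstrat i) (f : {set 'I_n} -> mprof) (m : mprof) :
  (forall T, f T = m) ->
  \sum_(T : {set 'I_n} | T \subset ~: [set i]) pr p n.-1 #|T| * mlin_dev t x (f T) =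
  obs_wt p i * mlin_dev t x m.
Proof. by move=> fm; rewrite /obs_wt big_distrl; apply: eq_bigr => T _; rewrite fm. Qed.

Section StablePureOutcome.
Variables (astar : prof) (p : R) (mu : popstate) (b : bstrat) (s : sstrat).
Hypotheses (p01 : 0 < p < 1) (mu_pop : is_popstate mu) (bs_eq : is_eq p mu b s)
  (out_astar : forall a, outcome p mu b s a = (if a == astar then 1 else 0)).

Let play_pure := play_eq_pure p01 mu_pop bs_eq out_astar.

Lemma b_eq_pure th : in_supp mu th -> b th = pure R astar.
Proof.
move=> th_supp; apply: functional_extensionality_dep => j.
by rewrite -(play_pure th_supp set0) /play in_set0.
Qed.

Lemma s_eq_pure j t : t \in fsupp (mu j) -> s j t = pure R astar j.
Proof.
move=> t_supp; have [th th_supp <-] := in_supp_at mu_pop t_supp.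
by rewrite -(play_pure th_supp setT) /play in_setT.
Qed.

Lemma pure_best_reply i t (x : mstrat i) : t \in fsupp (mu i) -> is_mixed x ->
  mlin_dev t x (pure R astar) <= mlin_dev t (pure R astar i) (pure R astar).
Proof.
move=> t_supp x_mixed; have [th th_supp th_i] := in_supp_at mu_pop t_supp.
have [_ _ obs_br _] := bs_eq; have := obs_br th th_supp i x x_mixed.
rewrite /U_obs (b_eq_pure th_supp) th_i.
by rewrite !(obs_sum_cst p _ _ (play_pure th_supp)) ler_pM2l ?obs_wt_gt0.
Qed.

End StablePureOutcome.

(* A type indifferent between all outcomes; its constant value exceeds [|t a*|] for
   every incumbent type [t], so it is not in the support. *)
Definition mutant (mu : popstate) (astar : prof) (j : 'I_n) : theta :=
  [ffun _ => 1 + \sum_(t <- fsupp (mu j)) `|t astar|].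

Lemma mutant_notin_supp mu astar j : mutant mu astar j \notin fsupp (mu j).
Proof.
apply/negP => mt_supp.
have : `|mutant mu astar j astar| <= \sum_(t <- fsupp (mu j)) `|t astar|.
  by rewrite (big_rem _ mt_supp) /= lerDl sumr_ge0.
have : 0 <= \sum_(t <- fsupp (mu j)) `|t astar| by exact: sumr_ge0.
move=> sum_ge0; rewrite /mutant ffunE ger0_norm; lra.
Qed.

Section Invasion.
Variables (astar : prof) (sig : mprof) (p : R) (mu : popstate) (eps : 'I_n -> R).
Hypotheses (sig_mprof : is_mprof sig) (p01 : 0 < p < 1) (mu_pop : is_popstate mu)
  (eps01 : forall j, 0 < eps j < 1).

Local Notation mt := (mutant mu astar).
Local Notation post := (postentry mu setT mt eps).

Definition all_mutants (th : tprof) := [forall j, th j == mt j].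
Definition invasion_b : bstrat := fun th => if all_mutants th then sig else pure R astar.
Definition invasion_s : sstrat := fun j _ => pure R astar j.

Local Notation play_inv := (play invasion_b invasion_s).

Lemma mem_post_supp j t : (t \in fsupp (post j)) = (t == mt j) || (t \in fsupp (mu j)).
Proof. by rewrite /postentry in_setT /= mem_rcons in_cons. Qed.

Lemma post_pos_wts : pos_wts post.
Proof.
move=> j t; rewrite mem_post_supp /postentry in_setT /=.
have /andP [eps0 eps1] := eps01 j; case: eqP => [_ | _ /= t_supp] //.
by rewrite mulr_gt0 ?subr_gt0 ?(popstate_pos_wts mu_pop).
Qed.

Lemma all_mutantsN th i : th i != mt i -> ~~ all_mutants th.
Proof. by move=> th_i; apply/forallP => /(_ i); apply/negP. Qed.

Lemma play_inv_mprof th T : is_mprof (play_inv th T).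
Proof.
apply: play_mprof => [|j]; last exact: pure_mixed.
by rewrite /invasion_b; case: ifP => _ //; exact: pure_mprof.
Qed.

Lemma play_inv_incumbent th T : ~~ all_mutants th -> play_inv th T = pure R astar.
Proof.
move=> not_mt; apply: functional_extensionality_dep => j.
by rewrite /play /invasion_b (negbTE not_mt); case: ifP.
Qed.

Lemma play_inv_mutants th T : all_mutants th -> play_inv th T = play_inv mt T.
Proof.
move=> all_mt; have all_mt' : all_mutants mt by apply/forallP.
by apply: functional_extensionality_dep => j; rewrite /play /invasion_b all_mt all_mt'.
Qed.

Lemma play_inv_coordinate : play_inv mt set0 = sig.
Proof.
have all_mt : all_mutants mt by apply/forallP.
by apply: functional_extensionality_dep => j; rewrite /play in_set0 /invasion_b all_mt.
Qed.

Lemma mutant_indifferent i (x y : mstrat i) (m : mprof) :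
  is_mixed x -> is_mixed y -> is_mprof m -> mlin_dev (mt i) x m = mlin_dev (mt i) y m.
Proof.
move=> x_mixed y_mixed m_mprof.
by rewrite !(mlin_dev_cst astar (c := mt i astar)) // => a; rewrite !ffunE.
Qed.

Hypothesis astar_br : forall i t (x : mstrat i), t \in fsupp (mu i) -> is_mixed x ->
  mlin_dev t x (pure R astar) <= mlin_dev t (pure R astar i) (pure R astar).

Lemma invasion_obs_br th i (x : mstrat i) : in_supp post th -> is_mixed x ->
  U_obs p invasion_b invasion_s th x <= U_obs p invasion_b invasion_s th (invasion_b th i).
Proof.
move=> th_supp x_mixed; have inv_b_mixed : is_mixed (invasion_b th i).
  by rewrite /invasion_b; case: ifP => _; [exact: sig_mprof | exact: pure_mixed].
have [th_i | th_i] := eqVneq (th i) (mt i).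
  rewrite /U_obs th_i le_eqVlt; apply/orP; left; apply/eqP/eq_bigr => T _.
  by rewrite (mutant_indifferent x_mixed inv_b_mixed (play_inv_mprof th T)).
have th_i_supp : th i \in fsupp (mu i).
  by move: (th_supp i); rewrite mem_post_supp (negbTE th_i).
have not_mt := all_mutantsN th_i; rewrite /U_obs {2}/invasion_b (negbTE not_mt).
rewrite !(obs_sum_cst p _ _ (fun T => play_inv_incumbent T not_mt)).
by rewrite ler_wpM2l ?(ltW (obs_wt_gt0 _ p01)) ?astar_br.
Qed.

Lemma invasion_nobs_br i t (x : mstrat i) : t \in fsupp (post i) -> is_mixed x ->
  U_nobs p post invasion_b invasion_s t x <=
  U_nobs p post invasion_b invasion_s t (invasion_s i t).
Proof.
move=> t_supp x_mixed; apply: (ler_texp post_pos_wts) => th [_ th_out].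
have th_i : th i = t by apply: th_out; rewrite !inE negbK.
have [t_mt | t_mt] := eqVneq t (mt i).
  rewrite t_mt le_eqVlt; apply/orP; left; apply/eqP/eq_bigr => T _.
  by rewrite (mutant_indifferent x_mixed (pure_mixed astar i) (play_inv_mprof th T)).
have t_supp_mu : t \in fsupp (mu i) by move: t_supp; rewrite mem_post_supp (negbTE t_mt).
have not_mt : ~~ all_mutants th by apply: (all_mutantsN (i := i)); rewrite th_i.
rewrite !(obs_sum_cst p _ _ (fun T => play_inv_incumbent T not_mt)).
by rewrite ler_wpM2l ?(ltW (obs_wt_gt0 _ p01)) ?astar_br.
Qed.

Lemma invasion_eq : is_eq p post invasion_b invasion_s.
Proof.
split=> [th _ | i t _ | th th_supp i x | i t t_supp x]; last 2 first.
- exact: invasion_obs_br.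
- exact: invasion_nobs_br.
- by rewrite /invasion_b; case: ifP => _; [exact: sig_mprof | exact: pure_mprof].
- exact: pure_mixed.
Qed.

Lemma invasion_near (b : bstrat) (s : sstrat) (eta : R) : (0 < n)%N -> 0 <= eta ->
  (forall th, in_supp mu th -> b th = pure R astar) ->
  (forall j t, t \in fsupp (mu j) -> s j t = pure R astar j) ->
  near eta mu b s invasion_b invasion_s.
Proof.
move=> n_gt0 eta_ge0 b_pure s_pure; split=> [th th_supp i a | i t t_supp a].
  have th_mt : th (Ordinal n_gt0) != mt (Ordinal n_gt0).
    by apply: contraNneq (mutant_notin_supp mu astar (Ordinal n_gt0)) => <-.
  by rewrite /invasion_b (negbTE (all_mutantsN th_mt)) b_pure // subrr normr0.
by rewrite s_pure // subrr normr0.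
Qed.

Variables (pi : 'I_n -> prof -> R) (K : R).
Hypotheses (n_gt0 : (0 < n)%N) (p_half : 1/2 <= p)
  (K_bound : forall j m, is_mprof m -> `|mlin (pi j) m| <= K).

Lemma invasion_gain j :
  (1 - p) * (2 * #|{set 'I_n}|%:R * (2 * K)) < mlin (pi j) sig - mlin (pi j) (pure R astar) ->
  \sum_(T : {set 'I_n}) pr p n #|T| * mlin (pi j) (pure R astar) <
  \sum_(T : {set 'I_n}) pr p n #|T| * mlin (pi j) (play_inv mt T).
Proof.
move=> gain_big; rewrite -subr_gt0 -sumrB; under eq_bigr do rewrite -mulrBr.
have K_ge0 : 0 <= K := le_trans (normr_ge0 _) (K_bound j (pure_mprof astar)).
apply: (pr_weighted_sum_gt0 (K := 2 * K) n_gt0) => [||T|]; last by rewrite play_inv_coordinate.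
- by rewrite p_half; case/andP: p01.
- by rewrite mulr_ge0.
have := K_bound j (play_inv_mprof mt T); have := K_bound j (pure_mprof astar).
by rewrite !ler_norml => /andP [_ astar_le] /andP [play_ge _]; lra.
Qed.

Lemma mutant_fitter j t :
  (1 - p) * (2 * #|{set 'I_n}|%:R * (2 * K)) < mlin (pi j) sig - mlin (pi j) (pure R astar) ->
  t \in fsupp (mu j) ->
  avgfit pi p post invasion_b invasion_s j t < avgfit pi p post invasion_b invasion_s j (mt j).
Proof.
move=> gain_big t_supp; have gain := invasion_gain gain_big.
have j_out : j \notin ~: [set j] by rewrite !inE negbK.
rewrite /avgfit (eq_texp (G := fun _ =>
    \sum_(T : {set 'I_n}) pr p n #|T| * mlin (pi j) (pure R astar))); last first.
  move=> th [_ th_out]; have th_j : th j != mt j.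
    by rewrite th_out //; apply: contraNneq (mutant_notin_supp mu astar j) => <-.
  by apply: eq_bigr => T _; rewrite play_inv_incumbent // (all_mutantsN th_j).
rewrite (texp_cst _ _ _ (fun _ => mt j)); apply: (ltr_texp post_pos_wts (th1 := mt)).
- move=> th _; case: (boolP (all_mutants th)) => [all_mt | not_mt].
    by under [X in _ <= X]eq_bigr do rewrite play_inv_mutants //; exact: ltW.
  by under [X in _ <= X]eq_bigr do rewrite play_inv_incumbent //.
- by split=> i; rewrite ?mem_post_supp ?eqxx // !inE negbK => /eqP ->.
- exact: gain.
Qed.

End Invasion.

Lemma mlin_bounded (pi : 'I_n -> prof -> R) :
  exists2 K, 0 <= K & forall j m, is_mprof m -> `|mlin (pi j) m| <= K.
Proof.
exists (\sum_j \sum_(a : prof) `|pi j a|) => [|j m m_mprof].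
  by apply: sumr_ge0 => j _; exact: sumr_ge0.
apply: le_trans (norm_mlin_le _ m_mprof) _.
by rewrite (bigD1 j) //= lerDl sumr_ge0 // => i _; exact: sumr_ge0.
Qed.

Lemma dominated_not_stable (pi : 'I_n -> prof -> R) (astar : prof) (sig : mprof) (p K : R) :
  (0 < n)%N -> is_mprof sig -> 0 < p < 1 -> 1/2 <= p ->
  (forall j m, is_mprof m -> `|mlin (pi j) m| <= K) ->
  (forall j, (1 - p) * (2 * #|{set 'I_n}|%:R * (2 * K)) <
             mlin (pi j) sig - mlin (pi j) (pure R astar)) ->
  ~ stable_pure pi p astar.
Proof.
move=> n_gt0 sig_mprof p01 p_half K_bound gain [mu [b [s [[mu_pop bs_eq _ invasion] out_astar]]]].
pose i0 := Ordinal n_gt0.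
have setT_neq0 : [set: 'I_n] != set0 by apply/set0Pn; exists i0.
have [etab [epsb [/andP [etab_ge0 _] /andP [epsb0 epsb1] entry]]] :=
  invasion setT setT_neq0 (mutant mu astar) (fun j _ => mutant_notin_supp mu astar j) 1 ltr01.
pose eps (j : 'I_n) := epsb / 2.
have eps01 j : 0 < eps j < 1 by apply/andP; split; rewrite /eps; lra.
have eps_small j : eps j < epsb by rewrite /eps; lra.
have [_ outcomes] := entry eps (fun j _ => eps01 j) (fun j _ => eps_small j).
have inv_eq := invasion_eq sig_mprof p01 mu_pop eps01 (pure_best_reply p01 mu_pop bs_eq out_astar).
have inv_near := invasion_near sig n_gt0 etab_ge0
  (b_eq_pure p01 mu_pop bs_eq out_astar) (s_eq_pure p01 mu_pop bs_eq out_astar).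
have fitter j t (t_supp : t \in fsupp (mu j)) :=
  mutant_fitter sig_mprof p01 mu_pop eps01 n_gt0 p_half K_bound (gain j) t_supp.
pose t0 j := head [ffun _ => 0] (fsupp (mu j)).
have t0_supp j : t0 j \in fsupp (mu j) := head_fsupp _ (mu_pop j).
case: (outcomes _ _ inv_eq inv_near) => [[j _ incumbents_fitter] | post_balanced].
  by have := lt_trans (incumbents_fitter _ (t0_supp j)) (fitter _ _ (t0_supp j)); rewrite ltxx.
have := post_balanced i0 (t0 i0) (mutant mu astar i0).
rewrite !mem_post_supp eqxx t0_supp orbT => /(_ isT isT) fit_eq.
by have := fitter _ _ (t0_supp i0); rewrite fit_eq ltxx.
Qed.

End Game.

Theorem mainTheorem14 (R : realFieldType) (n : nat) (Act : 'I_n -> finType)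
  (pi : 'I_n -> prof Act -> R) (astar : prof Act) :
  (0 < n)%N ->
  (forall pbar : R, 0 < pbar < 1 ->
     exists p : R, pbar < p < 1 /\ stable_pure pi p astar) ->
  weakly_pareto pi (pure R astar).
Proof.
move=> n_gt0 stable_near_one [sig [sig_mprof sig_dom]].
have [K K_ge0 K_bound] := mlin_bounded pi.
have c_ge0 : 0 <= 2 * #|{set 'I_n}|%:R * (2 * K) by rewrite !mulr_ge0.
have gain_pos j : 0 < mlin (pi j) sig - mlin (pi j) (pure R astar) by rewrite subr_gt0.
have [pbar pbar01 near_one] := near_one_threshold c_ge0 gain_pos.
have [p [p_near stable_p]] := stable_near_one pbar pbar01.
have [p_half gain] := near_one p p_near.
have p01 : 0 < p < 1 by case/andP: pbar01 p_near => pbar_gt0 _ /andP [pbar_p ->]; lra.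
exact: dominated_not_stable n_gt0 sig_mprof p01 p_half K_bound gain stable_p.
Qed.
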